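(* Let $q$ be a prime power, $n\ge 1$, and let $C=\langle B_r\rangle\oplus\langle B_t\rangle\subseteq\mathbb{F}_q^n$ be an $\mathbb{F}_q$-linear code, where $B_r$ is an $r\times n$ matrix and $B_t$ a $t\times n$ matrix over $\mathbb{F}_q$, each with linearly independent rows, and $t=\dim_{\mathbb{F}_q}\langle B_t\rangle\ge 2$. Let $A$ be an invertible $t\times t$ matrix over $\mathbb{F}_q$ having no eigenvalue in $\mathbb{F}_q$, and let $D_A\subseteq\mathbb{F}_q^{2n}$ be the code defined below. Then $D_A$ gives rise to an EAQECC with parameters $[[n,\,n-2r-t+c',\,d';\,c']]_q$, i.e. $c(D_A)=c'$, $k(D_A)=n-2r-t+c'$ and $d(D_A)=d'$, where $$c'=\frac12\,\mathrm{rank}\begin{pmatrix} B_tB_t^TA^T-AB_tB_t^T & -AB_tB_r^T & B_tB_r^T\\ B_rB_t^TA^T & 0 & B_rB_r^T\\ -B_rB_t^T & -B_rB_r^T & 0\end{pmatrix},$$ and $d'\ge \min\left\{\delta_1,\left\lceil\left(1+\frac1q\right)\delta_2\right\rceil\right\}$ with $\delta_1=d_H(C^{\perp_e})$ and $\delta_2=d_H(\langle B_r\rangle^{\perp_e})$.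
   Context: $\mathbb{F}_q$ is the finite field with $q$ elements. For $x,y\in\mathbb{F}_q^n$, $x\cdot_e y=\sum_i x_iy_i$ is the Euclidean inner product and $V^{\perp_e}$ denotes the Euclidean dual of a subspace $V$. For a matrix $B$, $\langle B\rangle$ is the row space of $B$. $d_H(V)$ is the minimum Hamming weight of a nonzero vector of $V$. On $\mathbb{F}_q^{2n}$ the symplectic product is $(x|y)\cdot_s(z|w)=x\cdot_e w-z\cdot_e y$, and $D^{\perp_s}$ denotes the symplectic dual of $D$. The symplectic weight of $(x|y)$ is $\#\{j:(x_j,y_j)\ne(0,0)\}$ and for $S\subseteq\mathbb{F}_q^{2n}$, $d_s(S)$ is the minimum symplectic weight of a nonzero element of $S$. For an $\mathbb{F}_q$-linear code $D\subseteq\mathbb{F}_q^{2n}$, the EAQECC it gives rise to has parameters $[[n,k(D),d(D);c(D)]]_q$, where $c(D)=\frac12(\dim D-\dim(D\cap D^{\perp_s}))$, $k(D)=n-\dim D+c(D)$ and $d(D)=d_s\big(D^{\perp_s}\setminus(D\cap D^{\perp_s})\big)$. Given $C=\langle B_r\rangle\oplus\langle B_t\rangle$ as in the claim and an invertible $t\times t$ matrix $A$, $D_A\subseteq\mathbb{F}_q^{2n}$ is the $\mathbb{F}_q$-linear code generated by the rows of the matrix $\begin{pmatrix}B_t & AB_t\\ B_r & 0\\ 0 & B_r\end{pmatrix}$ (called a Steane enlargement of the EAQECC determined by $C$). *)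

From HB Require Import structures.
From mathcomp Require Import all_boot all_order all_algebra all_field.
Set Implicit Arguments. Unset Strict Implicit. Unset Printing Implicit Defensive.
Import Order.TTheory GRing.Theory Num.Theory.
Local Open Scope ring_scope.

(* Codes are represented as row spaces of matrices (mxalgebra, %MS scope).
   A vector of F_q^{2n} is a row vector 'rV_(n + n) written (x | y)
   = row_mx x y, with x = lsubmx, y = rsubmx. *)

Section Defs.
Variable F : finFieldType.

Definition wtH (n : nat) (x : 'rV[F]_n) : nat := #|[set j : 'I_n | x 0 j != 0]|.

Definition wtS (n : nat) (z : 'rV[F]_(n + n)) : nat :=
  #|[set j : 'I_n | (lsubmx z 0 j != 0) || (rsubmx z 0 j != 0)]|.

Definition sympl (n : nat) (u v : 'rV[F]_(n + n)) : F :=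
  (lsubmx u *m (rsubmx v)^T - lsubmx v *m (rsubmx u)^T) 0 0.

Definition edual (m n : nat) (B : 'M[F]_(m, n)) : 'M[F]_n := kermx B^T.

(* Symplectic dual of <D>: u *m col_mx (rsubmx D)^T (- (lsubmx D)^T) is
   the row vector (sympl u (row i D))_i, so its kernel is exactly
   { u | forall i, sympl u (row i D) = 0 } (see lemma sdualP). *)
Definition sdual (m n : nat) (D : 'M[F]_(m, n + n)) : 'M[F]_(n + n) :=
  kermx (col_mx (rsubmx D)^T (- (lsubmx D)^T)).

(* minimum Hamming distance of the row space of V; n.+1 plays the role of
   +infinity when V has no nonzero vector (all weights are <= n). *)
Definition dH (m n : nat) (V : 'M[F]_(m, n)) : nat :=
  \big[minn/n.+1]_(x : 'rV[F]_n | (x <= V)%MS && (x != 0)) wtH x.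

Definition cE (m n : nat) (D : 'M[F]_(m, n + n)) : nat :=
  (\rank D - \rank (D :&: sdual D))./2.

Definition kE (m n : nat) (D : 'M[F]_(m, n + n)) : int :=
  (n%:Z - (\rank D)%:Z + (cE D)%:Z)%R.

(* minimum symplectic weight of D^{perp_s} \ (D cap D^{perp_s});
   n.+1 plays the role of +infinity for the empty set. *)
Definition dE (m n : nat) (D : 'M[F]_(m, n + n)) : nat :=
  \big[minn/n.+1]_(x : 'rV[F]_(n + n) |
       (x <= sdual D)%MS && ~~ (x <= D :&: sdual D)%MS) wtS x.

Definition DA (n r t : nat) (Br : 'M[F]_(r, n)) (Bt : 'M[F]_(t, n))
  (A : 'M[F]_t) : 'M[F]_(t + r + r, n + n) :=
  col_mx (col_mx (row_mx Bt (A *m Bt)) (row_mx Br 0)) (row_mx 0 Br).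

Definition cmat (n r t : nat) (Br : 'M[F]_(r, n)) (Bt : 'M[F]_(t, n))
  (A : 'M[F]_t) : 'M[F]_(t + r + r) :=
  col_mx
    (col_mx
      (row_mx (row_mx (Bt *m Bt^T *m A^T - A *m Bt *m Bt^T) (- (A *m Bt *m Br^T)))
              (Bt *m Br^T))
      (row_mx (row_mx (Br *m Bt^T *m A^T) 0) (Br *m Br^T)))
    (row_mx (row_mx (- (Br *m Bt^T)) (- (Br *m Br^T))) 0).

End Defs.

(* With S the matrix of the symplectic form, D_A S is the matrix whose
   half-rank is c', and rank (D S) = rank D - rank (D :&: D^{perp_s}) gives
   c(D_A) = c'; D_A has full row rank t + 2r, which gives k.
   A nonzero (x|y) in D_A^{perp_s} has x, y in <B_r>^{perp_e} and
   x B_t^T A^T = y B_t^T.  If x B_t^T = 0 then also y B_t^T = 0, so x and y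
   lie in C^{perp_e} and wt_s(x|y) >= delta1.  Otherwise, since A has no
   eigenvalue, (y - l x) B_t^T = x B_t^T (A^T - l) is nonzero for every l,
   so x and the q vectors y - l x are nonzero words of <B_r>^{perp_e}; each
   coordinate of the support of (x|y) lies in the support of exactly q of
   these q + 1 words, whence (q + 1) delta2 <= q wt_s(x|y). *)

From HB Require Import structures.
From mathcomp Require Import all_boot all_order all_algebra all_field.
From mathcomp Require Import zify.
Set Implicit Arguments.
Unset Strict Implicit.
Unset Printing Implicit Defensive.

Import Order.TTheory GRing.Theory Num.Theory.
Local Open Scope ring_scope.

Lemma card_set_sum (I : finType) (P : pred I) : #|[set i | P i]| = (\sum_i P i)%N.
Proof. by rewrite -sum1dep_card big_mkcond; apply: eq_bigr => i _; case: (P i). Qed.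

Lemma bigmin_le (I : finType) (P : pred I) (G : I -> nat) m i :
  P i -> (\big[minn/m]_(j | P j) G j <= G i)%N.
Proof.
move=> Pi; rewrite -big_filter.
have : i \in [seq j <- index_enum I | P j] by rewrite mem_filter Pi mem_index_enum.
elim: [seq j <- _ | _] => // j s IH; rewrite inE big_cons => /orP[/eqP <-|/IH].
  exact: geq_minl.
exact: leq_trans (geq_minr _ _).
Qed.

Section Weights.
Variable F : finFieldType.

(* For [a != 0] exactly one [l] kills [b - l * a]; for [a = 0] none or all do. *)
Lemma card_pencil_coord (a b : F) :
  ((a != 0%R) + #|[set l : F | (b - l * a)%R != 0%R]| = #|F| * ((a != 0%R) || (b != 0%R)))%N.
Proof.
have [->|a0] := eqVneq a 0.
  under eq_finset do rewrite mulr0 subr0.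
  by case: (b != 0); rewrite ?muln1 ?muln0 -?cardsT ?cards0.
have -> : [set l : F | b - l * a != 0] = [set~ b / a].
  apply/setP => l; rewrite !inE subr_eq0 eq_sym; congr (~~ _).
  exact: (can2_eq (mulfK a0) (divfK a0)).
by rewrite cardsC1 muln1 add1n prednK //; apply/card_gt0P; exists 0.
Qed.

Variable n : nat.
Implicit Types (x : 'rV[F]_n) (z : 'rV[F]_(n + n)).

Lemma wtH_pencil z :
  (wtH (lsubmx z) + \sum_(l : F) wtH (rsubmx z - l *: lsubmx z) = #|F| * wtS z)%N.
Proof.
rewrite /wtS /wtH !card_set_sum.
rewrite (eq_bigr _ (fun l _ => card_set_sum _)).
rewrite exchange_big -big_split big_distrr; apply: eq_bigr => j _ /=.
rewrite -card_pencil_coord card_set_sum; congr (_ + _)%N.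
by apply: eq_bigr => l _; rewrite !mxE.
Qed.

Lemma wtH_lsub_le z : (wtH (lsubmx z) <= wtS z)%N.
Proof. by apply: subset_leq_card; apply/subsetP => j; rewrite !inE => ->. Qed.

Lemma wtH_rsub_le z : (wtH (rsubmx z) <= wtS z)%N.
Proof. by apply: subset_leq_card; apply/subsetP => j; rewrite !inE orbC => ->. Qed.

Lemma dH_le_wtH (m : nat) (V : 'M[F]_(m, n)) x :
  (x <= V)%MS -> x != 0 -> (dH V <= wtH x)%N.
Proof. by move=> xV x0; apply: bigmin_le; rewrite xV. Qed.

Lemma dH_le_succ (m : nat) (V : 'M[F]_(m, n)) : (dH V <= n.+1)%N.
Proof.
apply: (big_ind (fun k => k <= n.+1)%N) => // [k l kn _|x _].
  by rewrite geq_min kn.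
by apply: leqW; rewrite /wtH -[n in (_ <= n)%N]card_ord max_card.
Qed.

Lemma dH_le_wtS (m : nat) (V : 'M[F]_(m, n)) z :
  z != 0 -> (lsubmx z <= V)%MS -> (rsubmx z <= V)%MS -> (dH V <= wtS z)%N.
Proof.
move=> z0 zlV zrV; have [zl0|zl0] := eqVneq (lsubmx z) 0.
  have zr0 : rsubmx z != 0.
    by apply: contraNneq z0 => zr0; rewrite -(hsubmxK z) zl0 zr0 row_mx0.
  exact: leq_trans (dH_le_wtH zrV zr0) (wtH_rsub_le z).
exact: leq_trans (dH_le_wtH zlV zl0) (wtH_lsub_le z).
Qed.

Lemma dH_pencil_le_wtS (m : nat) (V : 'M[F]_(m, n)) z :
  lsubmx z != 0 -> (lsubmx z <= V)%MS -> (rsubmx z <= V)%MS ->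
  (forall l, rsubmx z != l *: lsubmx z) ->
  ((#|F| + 1) * dH V <= #|F| * wtS z)%N.
Proof.
move=> zl0 zlV zrV zr_pencil; rewrite -wtH_pencil mulnDl mul1n addnC.
apply: leq_add; first exact: dH_le_wtH.
rewrite -sum_nat_const; apply: leq_sum => l _; apply: dH_le_wtH.
  by rewrite addmx_sub ?eqmx_opp ?scalemx_sub.
by rewrite subr_eq0.
Qed.

End Weights.

Lemma row_free_col_mx (F : fieldType) (m1 m2 n : nat)
    (B1 : 'M[F]_(m1, n)) (B2 : 'M[F]_(m2, n)) :
  row_free B1 -> row_free B2 -> (B1 :&: B2)%MS = 0 -> row_free (col_mx B1 B2).
Proof.
move=> /eqP free1 /eqP free2 cap0; apply/eqP.
by have := mxrank_sum_cap B1 B2; rewrite cap0 mxrank0 addn0 addsmxE free1 free2.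
Qed.

Lemma mulmx_tr_neq_scale (F : fieldType) (t : nat) (A : 'M[F]_t) (a : 'rV[F]_t) l :
  ~~ eigenvalue A l -> a != 0 -> a *m A^T != l *: a.
Proof.
move=> noeig a0; have free : row_free (A^T - l%:M).
  by move: noeig; rewrite /eigenvalue /eigenspace negbK kermx_eq0 /row_free
    -mxrank_tr linearB /= tr_scalar_mx.
by rewrite -subr_eq0 -mul_mx_scalar -mulmxBr mulmx_free_eq0.
Qed.

Lemma ceil_1DV_mul_le (R : archiFieldType) (q d w : nat) :
  (0 < q)%N -> ((q + 1) * d <= q * w)%N ->
  Num.ceil ((1 + q%:R^-1) * d%:R : R) <= w%:Z.
Proof.
move=> q0 dw; rewrite ceil_le_int.
have q0R : 0 < q%:R :> R by rewrite ltr0n.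
have -> : 1 + q%:R^-1 = (q + 1)%:R / q%:R :> R.
  by rewrite natrD mulrDl divff ?mul1r // gt_eqF.
by rewrite mulrAC ler_pdivrMr // -pmulrn -!natrM ler_nat [(w * q)%N]mulnC.
Qed.

Section Eaqecc.
Variables (F : finFieldType) (m n : nat) (D : 'M[F]_(m, n + n)).

Lemma cE_rank_sympl_gram :
  cE D = (\rank (D *m col_mx (rsubmx D)^T (- (lsubmx D)^T)))./2.
Proof. by rewrite /cE -(mxrank_mul_ker D (col_mx (rsubmx D)^T (- (lsubmx D)^T))) addnK. Qed.

Lemma dE_ge (K : int) : K <= (n.+1)%:Z ->
  (forall x, (x <= sdual D)%MS -> ~~ (x <= D)%MS -> K <= (wtS x)%:Z) ->
  K <= (dE D)%:Z.
Proof.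
move=> Kn Kx; apply: (big_ind (fun k : nat => K <= k%:Z)) => //.
  by move=> k l; case: leqP.
by move=> x /andP[xs]; rewrite sub_capmx xs andbT; apply: Kx.
Qed.

End Eaqecc.

Section SteaneEnlargement.
Variables (F : finFieldType) (n r t : nat).
Variables (Br : 'M[F]_(r, n)) (Bt : 'M[F]_(t, n)) (A : 'M[F]_t).

Local Notation D := (DA Br Bt A).

Lemma DA_row_mx :
  D = row_mx (col_mx (col_mx Bt Br) 0) (col_mx (col_mx (A *m Bt) 0) Br).
Proof.
rewrite /DA -[col_mx (row_mx Bt _) _]/(block_mx _ _ _ _) block_mxEh.
by rewrite -[col_mx (row_mx _ _) (row_mx 0 Br)]/(block_mx _ _ _ _) block_mxEh.
Qed.

Lemma lsubmx_DA : lsubmx D = col_mx (col_mx Bt Br) 0.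
Proof. by rewrite DA_row_mx row_mxKl. Qed.

Lemma rsubmx_DA : rsubmx D = col_mx (col_mx (A *m Bt) 0) Br.
Proof. by rewrite DA_row_mx row_mxKr. Qed.

Lemma DA_sympl_gram : D *m col_mx (rsubmx D)^T (- (lsubmx D)^T) = cmat Br Bt A.
Proof.
rewrite {1}DA_row_mx lsubmx_DA rsubmx_DA mul_row_col !tr_col_mx !trmx0.
rewrite !opp_row_mx !mul_col_mx !mul_mx_row !mul0mx !mulmx0 !add_col_mx !add_row_mx.
by rewrite !oppr0 !mulmx0 !mulmxN !(addr0, add0r) /cmat !trmx_mul !mulmxA.
Qed.

Lemma rank_DA : row_free Br -> row_free Bt -> (Br :&: Bt)%MS = 0 ->
  \rank D = (t + r + r)%N.
Proof.
move=> freeBr freeBt cap0; have freeC := row_free_col_mx freeBr freeBt cap0.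
apply/eqP; rewrite -/(row_free _) -kermx_eq0; apply/rowV0P => v /sub_kermxP.
rewrite -(hsubmxK v) -(hsubmxK (lsubmx v)) /DA !mul_row_col !mul_mx_row.
rewrite !mulmx0 !add_row_mx !addr0 -row_mx0 => /eq_row_mx[vl vr].
have : row_mx (rsubmx (lsubmx v)) (lsubmx (lsubmx v)) *m col_mx Br Bt == 0.
  by rewrite mul_row_col addrC vl.
rewrite mulmx_free_eq0 // row_mx_eq0 => /andP[/eqP v2 /eqP v1].
move: vr; rewrite v1 mul0mx add0r => /eqP; rewrite mulmx_free_eq0 // => /eqP v3.
by rewrite v2 v3 !row_mx0.
Qed.

Lemma sub_sdual_DA (x : 'rV[F]_(n + n)) : (x <= sdual D)%MS ->
  [/\ lsubmx x *m Bt^T *m A^T = rsubmx x *m Bt^T, lsubmx x *m Br^T = 0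
    & rsubmx x *m Br^T = 0].
Proof.
rewrite /sdual lsubmx_DA rsubmx_DA => /sub_kermxP.
rewrite -{1}(hsubmxK x) mul_row_col !tr_col_mx !trmx0 !opp_row_mx !mul_mx_row.
rewrite !oppr0 !mulmx0 !mulmxN !add_row_mx add0r addr0 -!row_mx0.
move=> /eq_row_mx[/eq_row_mx[eqt /eqP eqr] eql]; split=> //.
  by apply/eqP; rewrite -subr_eq0 -mulmxA -trmx_mul eqt.
by apply/eqP; rewrite -oppr_eq0.
Qed.

Lemma wtS_sdual_DA (x : 'rV[F]_(n + n)) :
  (forall l, ~~ eigenvalue A l) -> (x <= sdual D)%MS -> x != 0 ->
  (dH (edual (col_mx Br Bt)) <= wtS x)%N \/
  ((#|F| + 1) * dH (edual Br) <= #|F| * wtS x)%N.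
Proof.
move=> noeig /sub_sdual_DA[eqt eql eqr] x0.
have [xt0|xt0] := eqVneq (lsubmx x *m Bt^T) 0.
  left; have yt0 : rsubmx x *m Bt^T = 0 by rewrite -eqt xt0 mul0mx.
  by apply: dH_le_wtS; rewrite // sub_kermx tr_col_mx mul_mx_row ?eql ?eqr ?xt0 ?yt0 row_mx0.
right; apply: dH_pencil_le_wtS; rewrite ?sub_kermx ?eql ?eqr //.
  by apply: contraNneq xt0 => ->; rewrite mul0mx.
move=> l; apply: contra_neq (mulmx_tr_neq_scale (noeig l) xt0) => yl.
by rewrite eqt yl scalemxAl.
Qed.

End SteaneEnlargement.

Theorem theorem2p2 (F : finFieldType) (n r t : nat)
  (Br : 'M[F]_(r, n)) (Bt : 'M[F]_(t, n)) (A : 'M[F]_t) :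
  (0 < n)%N -> (2 <= t)%N ->
  row_free Br -> row_free Bt ->
  (Br :&: Bt)%MS = 0 ->
  A \in unitmx -> (forall a : F, ~~ eigenvalue A a) ->
  let D := DA Br Bt A in
  let c' := ((\rank (cmat Br Bt A))./2)%N in
  let q := #|F| in
  let delta1 := dH (edual (col_mx Br Bt)) in
  let delta2 := dH (edual Br) in
  [/\ cE D = c',
      kE D = n%:Z - 2%:Z * r%:Z - t%:Z + c'%:Z
    & Order.min delta1%:Z (Num.ceil ((1 + q%:R^-1) * delta2%:R : rat))
        <= (dE D)%:Z].
Proof.
move=> _ _ freeBr freeBt cap0 _ noeig D c' q delta1 delta2.
have cD : cE D = c' by rewrite cE_rank_sympl_gram DA_sympl_gram.
split=> //.
  by rewrite /kE cD rank_DA //; lia.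
apply: dE_ge => [|x xs xD].
  by rewrite ge_min lez_nat dH_le_succ.
have x0 : x != 0 by apply: contraNneq xD => ->; exact: sub0mx.
have q0 : (0 < q)%N by apply/card_gt0P; exists 0.
rewrite ge_min; case: (wtS_sdual_DA noeig xs x0) => [d1x|d2x].
  by rewrite lez_nat d1x.
by rewrite ceil_1DV_mul_le ?orbT.
Qed.
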